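(* Let $0\le\underline{m}<m$ and $r\ge0$ be integers, $\epsilon\in(0,1/2)$, and $k=m-\underline{m}$. If $z'\in\{0,1\}^{\mathbb{F}_2^{\underline{m}}}$ has independent entries each equal to $1$ with probability $\epsilon$, then $$\mathbb{P}\big[P_e(\underline{m},m,r,\epsilon\mid z')\ge P_e(m,r,\epsilon)/2+1/4\big]\le\frac{2^{2-k}}{(1/2-P_e(m,r,\epsilon))^2}.$$
   Context: $RM(m,r)$ is the set of evaluation vectors $(f(x))_{x\in\mathbb{F}_2^m}$ of polynomials over $\mathbb{F}_2$ in $m$ variables of degree at most $r$. Draw $f$ uniformly from $RM(m,r)$, $Z\in\{0,1\}^{\mathbb{F}_2^m}$ with i.i.d. Bernoulli$(\epsilon)$ entries independent of $f$, and $\tilde f=f+Z$. $L_{m,r,\epsilon}(\tilde f)$ is the most likely value of $f(0^m)$ given $\tilde f(x)$ for all $x\ne0^m$ (uniformly random if tied), and $P_e(m,r,\epsilon)=\mathbb{P}(L_{m,r,\epsilon}(\tilde f)\ne f(0^m))$. Identify $\mathbb{F}_2^{\underline{m}}$ with $\mathbb{F}_2^{\underline{m}}\times\{0\}^{m-\underline{m}}\subseteq\mathbb{F}_2^m$; for $z'\in\{0,1\}^{\mathbb{F}_2^{\underline{m}}}$, $P_e(\underline{m},m,r,\epsilon\mid z')$ is the probability that $L_{m,r,\epsilon}(\tilde f)\ne f(0^m)$ conditioned on the restriction of $Z$ to $\mathbb{F}_2^{\underline{m}}\times\{0\}^{m-\underline{m}}$ being $z'$. *)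

From mathcomp Require Import all_boot all_order all_algebra.
Set Implicit Arguments. Unset Strict Implicit. Unset Printing Implicit Defensive.
Import Order.TTheory GRing.Theory Num.Theory.
Local Open Scope ring_scope.

(* F_2 is modelled by bool (addition = xor [addb], multiplication = [&&]).
   A point of F_2^m is a function 'I_m -> bool; a word is a function on points. *)
Notation point m := {ffun 'I_m -> bool}.
Notation word m := {ffun point m -> bool}.

Definition zeropt (m : nat) : point m := [ffun _ => false].

Definition monomial_eval (m : nat) (c : {ffun {set 'I_m} -> bool}) (x : point m)
  : bool :=
  \big[addb/false]_(S : {set 'I_m}) (c S && [forall i in S, x i]).

(* RM(m,r): evaluation vectors of polynomials of degree <= r in m variables
   (over F_2 such functions are exactly spanned by monomials prod_{i in S} x_i
   with |S| <= r). *)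
Definition RM (m r : nat) : {set word m} :=
  [set f : word m | [exists c : {ffun {set 'I_m} -> bool},
     [forall S : {set 'I_m}, (r < #|S|)%N ==> ~~ c S] &&
     [forall x : point m, f x == monomial_eval c x]]].

Definition bw (R : realFieldType) (e : R) (b : bool) : R := if b then e else 1 - e.
Definition wt (R : realFieldType) (T : finType) (e : R) (Z : {ffun T -> bool}) : R :=
  \prod_(x : T) bw e (Z x).

Definition recv (m : nat) (f Z : word m) : word m := [ffun x => f x (+) Z x].

(* (|RM| times) the joint probability that f(0^m) = b and that the received
   values at all x <> 0^m equal those of y *)
Definition lik (R : realFieldType) (m r : nat) (e : R) (y : word m) (b : bool) : R :=
  \sum_(g in RM m r | g (zeropt m) == b)
     \prod_(x : point m | x != zeropt m) bw e (y x (+) g x).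

(* probability that the MAP decoder L_{m,r,eps} errs on received word y when
   the true value f(0^m) is b (ties are broken uniformly at random) *)
Definition derr (R : realFieldType) (m r : nat) (e : R) (y : word m) (b : bool) : R :=
  let a := lik r e y b in let a' := lik r e y (~~ b) in
  if a' < a then 0 else if a' == a then 1 / 2 else 1.

Definition Pe (R : realFieldType) (m r : nat) (e : R) : R :=
  \sum_(f in RM m r) \sum_(Z : word m)
     (#|RM m r|%:R)^-1 * wt e Z * derr r e (recv f Z) (f (zeropt m)).

Definition emb (m_ m : nat) (x : point m_) : point m :=
  [ffun i : 'I_m => if (insub (val i) : option 'I_m_) is Some j then x j else false].

Definition restr (m_ m : nat) (Z : word m) : word m_ :=
  [ffun x : point m_ => Z (emb m x)].

Definition condPe (R : realFieldType) (m_ m r : nat) (e : R) (z' : word m_) : R :=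
  (\sum_(f in RM m r) \sum_(Z : word m | restr m_ Z == z')
     (#|RM m r|%:R)^-1 * wt e Z * derr r e (recv f Z) (f (zeropt m)))
  / (\sum_(Z : word m | restr m_ Z == z') wt e Z).
Arguments condPe {R} m_ m r e z'.
Arguments Pe {R} m r e.

(* Let X(Z) be the decoding error probability given the noise Z, so that
   P_e = E[X], and let a_d be the variance of E[X | Z on F_2^d x 0].  Between
   F_2^n x 0 and F_2^(n+2) x 0 lie three subspaces V1, V2, V3, any two of which
   meet in F_2^n x 0; expanding E[(u - v1 - v2 - v3 + 2 c)^2] >= 0 for the
   corresponding conditional expectations gives a_(n+2) + 2 a_n >= a(V1) +
   a(V2) + a(V3).  Taking V1 = F_2^(n+1) x 0, the other two are its images
   under a coordinate swap and a transvection, linear maps that preserve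
   RM(m,r) and hence X, so a(V2) = a(V3) = a_(n+1).  As a_0 = 0 (the decoder
   ignores Z(0)), this yields a_(d+1) >= 2 a_d and a_(m_) <= 2^(-k) a_m
   <= 2^(-k); Chebyshev's inequality at distance (1/2 - P_e)/2 >= 0 (MAP
   decoding beats a coin flip) concludes. *)

From mathcomp Require Import all_boot all_order all_algebra perm.
From mathcomp Require Import ring lra.
Set Implicit Arguments. Unset Strict Implicit. Unset Printing Implicit Defensive.
Import Order.TTheory GRing.Theory Num.Theory.
Local Open Scope ring_scope.

Section BernoulliNoise.
Variables (R : realFieldType) (e : R) (T : finType).
Hypotheses (e_ge0 : 0 <= e) (e_le1 : e <= 1).
Local Notation W := {ffun T -> bool}.

Lemma bwDN b : bw e b + bw e (~~ b) = 1.
Proof. by case: b; rewrite /bw /=; ring. Qed.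

Lemma bw_ge0 b : 0 <= bw e b.
Proof. by case: b; rewrite /bw /= ?subr_ge0. Qed.

Lemma wt_ge0 (Z : W) : 0 <= wt e Z.
Proof. by apply: prodr_ge0 => x _; apply: bw_ge0. Qed.

Lemma sum_ffun_prod (h : T -> bool -> R) :
  \sum_(U : W) \prod_x h x (U x) = \prod_x (h x true + h x false).
Proof.
transitivity (\prod_x \sum_(b : bool) h x b); first by rewrite bigA_distr_bigA.
by apply: eq_bigr => x _; rewrite big_bool.
Qed.

Lemma sum_wt : \sum_(Z : W) wt e Z = 1.
Proof.
by rewrite /wt (sum_ffun_prod (fun _ => bw e)); apply: big1 => x _; apply: bwDN.
Qed.

Definition mean (F : W -> R) : R := \sum_(Z : W) wt e Z * F Z.

(* [condE A F Z] is E[F U] for [U] equal to [Z] on [A] and fresh noise off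
   [A], i.e. the conditional expectation of [F] given the coordinates in [A]. *)
Definition cond_kernel (b z w : bool) : R := if b then (z == w)%:R else bw e w.

Definition condE (A : {set T}) (F : W -> R) (Z : W) : R :=
  \sum_(U : W) (\prod_x cond_kernel (x \in A) (Z x) (U x)) * F U.

Definition msq_condE (A : {set T}) (F : W -> R) : R :=
  mean (fun Z => condE A F Z ^+ 2).

Lemma cond_kernelD b z : cond_kernel b z true + cond_kernel b z false = 1.
Proof. by case: b; case: z; rewrite /cond_kernel /bw /=; ring. Qed.

Lemma sum_cond_kernel (A : {set T}) (Z : W) :
  \sum_(U : W) \prod_x cond_kernel (x \in A) (Z x) (U x) = 1.
Proof.
rewrite (sum_ffun_prod (fun x => cond_kernel (x \in A) (Z x))).
by apply: big1 => x _; apply: cond_kernelD.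
Qed.

Lemma condE_cst A c (Z : W) : condE A (fun _ => c) Z = c.
Proof. by rewrite /condE -mulr_suml sum_cond_kernel mul1r. Qed.

Lemma condE_subr A F c (Z : W) : condE A (fun U => F U - c) Z = condE A F Z - c.
Proof.
rewrite /condE; under eq_bigr do rewrite mulrBr.
by rewrite sumrB -mulr_suml sum_cond_kernel mul1r.
Qed.

Lemma condE_setT F (Z : W) : condE setT F Z = F Z.
Proof.
rewrite /condE (bigD1 Z) //= [X in _ + X]big1 ?addr0 => [|U UZ].
  by rewrite big1 ?mul1r // => x _; rewrite inE /cond_kernel eqxx.
have [x ZUx] : exists x, Z x != U x.
  apply/existsP; apply: contraNT UZ => /existsPn ZU.
  by apply/eqP/ffunP => x; apply/esym/eqP/negPn.
by rewrite (bigD1 x) //= inE /cond_kernel (negbTE ZUx) !mul0r.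
Qed.

Lemma condE_set0 F (Z : W) : condE set0 F Z = mean F.
Proof. by apply: eq_bigr => U _; congr (_ * _); apply: eq_bigr => x _; rewrite inE. Qed.

(* The joint law of two resamplings of one [Z] only depends on the coordinates
   that both keep. *)
Lemma sum_wt_cond_kernel2 (a b c : T -> bool) (U V : W) :
  (forall x, a x && b x = c x) ->
  \sum_(Z : W) wt e Z * \prod_x cond_kernel (a x) (Z x) (U x)
                      * \prod_x cond_kernel (b x) (Z x) (V x)
  = \sum_(Z : W) wt e Z * \prod_x cond_kernel (c x) (Z x) (U x)
                        * \prod_x cond_kernel (c x) (Z x) (V x).
Proof.
move=> abc; under eq_bigr do rewrite /wt -!big_split /=.
under [RHS]eq_bigr do rewrite /wt -!big_split /=.
pose h a' b' x z := bw e z * cond_kernel (a' x) z (U x) * cond_kernel (b' x) z (V x).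
rewrite (sum_ffun_prod (h a b)) (sum_ffun_prod (h c c)) /h.
apply: eq_bigr => x _; rewrite -abc.
by case: (a x); case: (b x); case: (U x); case: (V x); rewrite /cond_kernel /bw /=; ring.
Qed.

Lemma mean_condE_mul A B F G :
  mean (fun Z => condE A F Z * condE B G Z)
  = mean (fun Z => condE (A :&: B) F Z * condE (A :&: B) G Z).
Proof.
have expand C D : mean (fun Z => condE C F Z * condE D G Z) =
    \sum_(U : W) \sum_(V : W) (\sum_(Z : W) wt e Z
       * \prod_x cond_kernel (x \in C) (Z x) (U x)
       * \prod_x cond_kernel (x \in D) (Z x) (V x)) * (F U * G V).
  rewrite /mean /condE.
  under eq_bigr => Z _.
    rewrite mulr_suml mulr_sumr; under eq_bigr do rewrite mulr_sumr mulr_sumr.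
  over.
  rewrite exchange_big; apply: eq_bigr => U _; rewrite exchange_big.
  by apply: eq_bigr => V _; rewrite mulr_suml; apply: eq_bigr => Z _; ring.
rewrite !expand; apply: eq_bigr => U _; apply: eq_bigr => V _.
by rewrite (@sum_wt_cond_kernel2 _ _ (fun x => x \in A :&: B)) // => x; rewrite inE.
Qed.

Definition flip (x0 : T) (U : W) : W := [ffun x => if x == x0 then ~~ U x else U x].

Lemma flipK x0 : involutive (flip x0).
Proof. by move=> U; apply/ffunP => x; rewrite !ffunE; case: (x == x0); rewrite ?negbK. Qed.

(* Pair [U] with [flip x0 U]. *)
Lemma sum_flip_avg x0 (g : bool -> R) (H : W -> R) :
  (forall U, H (flip x0 U) = H U) ->
  \sum_(U : W) g (U x0) * H U = \sum_(U : W) (g true + g false) / 2 * H U.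
Proof.
move=> Hflip; set S := LHS.
have twoS : S + S = \sum_(U : W) (g true + g false) * H U.
  rewrite {2}/S (reindex_inj (inv_inj (flipK x0))) -big_split /=.
  by apply: eq_bigr => U _; rewrite Hflip ffunE eqxx; case: (U x0); ring.
have -> : \sum_(U : W) (g true + g false) / 2 * H U = (S + S) / 2.
  by rewrite twoS -!mulr_sumr mulrAC.
lra.
Qed.

Lemma condE_setD1 A x0 F (Z : W) :
  (forall U, F (flip x0 U) = F U) -> condE A F Z = condE (A :\ x0) F Z.
Proof.
move=> Fflip; rewrite /condE.
under eq_bigr do rewrite (bigD1 x0) //= -mulrA.
under [RHS]eq_bigr do rewrite (bigD1 x0) //= -mulrA.
rewrite !sum_flip_avg => [|U|U].
- apply: eq_bigr => U _; rewrite !cond_kernelD; congr (_ * (_ * _)).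
  by apply: eq_bigr => x x_x0; rewrite !inE x_x0.
- congr (_ * _); last exact: Fflip.
  by apply: eq_bigr => x x_x0; rewrite ffunE (negbTE x_x0).
- congr (_ * _); last exact: Fflip.
  by apply: eq_bigr => x x_x0; rewrite ffunE (negbTE x_x0).
Qed.

Definition precomp (phi : T -> T) (U : W) : W := [ffun x => U (phi x)].

Section Involution.
Variable phi : T -> T.
Hypothesis phiK : involutive phi.

Lemma precompK : involutive (precomp phi).
Proof. by move=> U; apply/ffunP => x; rewrite !ffunE phiK. Qed.

Lemma wt_precomp (Z : W) : wt e (precomp phi Z) = wt e Z.
Proof.
rewrite /wt [RHS](reindex_inj (inv_inj phiK)) /=.
by apply: eq_bigr => x _; rewrite ffunE.
Qed.

Lemma condE_precomp (A : {set T}) F (Z : W) :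
  condE [set x | phi x \in A] F (precomp phi Z) = condE A (F \o precomp phi) Z.
Proof.
rewrite /condE (reindex_inj (inv_inj precompK)) /=; apply: eq_bigr => U _.
congr (_ * _); rewrite [RHS](reindex_inj (inv_inj phiK)) /=.
by apply: eq_bigr => x _; rewrite !ffunE inE.
Qed.

Lemma msq_condE_precomp (A : {set T}) F : (forall U, F (precomp phi U) = F U) ->
  msq_condE [set x | phi x \in A] F = msq_condE A F.
Proof.
move=> Finv; rewrite /msq_condE /mean (reindex_inj (inv_inj precompK)) /=.
apply: eq_bigr => Z _; rewrite wt_precomp condE_precomp.
by congr (_ * (_ ^+ 2)); apply: eq_bigr => U _; rewrite /= Finv.
Qed.

End Involution.

(* Expand [0 <= E[(u - v1 - v2 - v3 + 2 c)^2]], [u], [vi], [c] being the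
   conditional expectations of [F] on [U], [Vi], [C]; by [mean_condE_mul]
   every cross term is the [msq_condE] of an intersection. *)
Lemma msq_condE_triple F (U V1 V2 V3 C : {set T}) :
  V1 \subset U -> V2 \subset U -> V3 \subset U ->
  V1 :&: V2 = C -> V1 :&: V3 = C -> V2 :&: V3 = C ->
  msq_condE V1 F + msq_condE V2 F + msq_condE V3 F
  <= msq_condE U F + 2 * msq_condE C F.
Proof.
move=> /setIidPr UV1 /setIidPr UV2 /setIidPr UV3 V12 V13 V23.
have CV1 : V1 :&: C = C by rewrite -V12 setIA setIid.
have CV2 : V2 :&: C = C by rewrite -V12 setIC -setIA setIid.
have CV3 : V3 :&: C = C by rewrite -V13 setIC -setIA setIid.
have UC : U :&: C = C by rewrite -CV1 setIA UV1.
have ip A B : \sum_(Z : W) wt e Z * condE A F Z * condE B F Z = msq_condE (A :&: B) F.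
  transitivity (mean (fun Z => condE A F Z * condE B F Z)).
    by apply: eq_bigr => Z _; rewrite mulrA.
  by rewrite mean_condE_mul; apply: eq_bigr => Z _; rewrite expr2.
set u := condE U F; set v1 := condE V1 F; set v2 := condE V2 F; set v3 := condE V3 F.
set c := condE C F.
have sq_ge0 : 0 <= \sum_(Z : W) wt e Z * (u Z - v1 Z - v2 Z - v3 Z + 2 * c Z) ^+ 2.
  by apply: sumr_ge0 => Z _; rewrite mulr_ge0 ?wt_ge0 ?sqr_ge0.
have expand : \sum_(Z : W) wt e Z * (u Z - v1 Z - v2 Z - v3 Z + 2 * c Z) ^+ 2 =
  \sum_(Z : W) (wt e Z * u Z * u Z + wt e Z * v1 Z * v1 Z + wt e Z * v2 Z * v2 Z
    + wt e Z * v3 Z * v3 Z + 4 * (wt e Z * c Z * c Z)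
    - 2 * (wt e Z * u Z * v1 Z) - 2 * (wt e Z * u Z * v2 Z) - 2 * (wt e Z * u Z * v3 Z)
    + 4 * (wt e Z * u Z * c Z) + 2 * (wt e Z * v1 Z * v2 Z) + 2 * (wt e Z * v1 Z * v3 Z)
    + 2 * (wt e Z * v2 Z * v3 Z) - 4 * (wt e Z * v1 Z * c Z) - 4 * (wt e Z * v2 Z * c Z)
    - 4 * (wt e Z * v3 Z * c Z)).
  by apply: eq_bigr => Z _; ring.
move: sq_ge0; rewrite expand !(big_split, sumrN) -!mulr_sumr /= !ip !setIid.
rewrite UV1 UV2 UV3 UC V12 V13 V23 CV1 CV2 CV3; lra.
Qed.

Lemma chebyshev (G : W -> R) t : 0 <= t ->
  (\sum_(Z : W | t <= G Z) wt e Z) * t ^+ 2 <= mean (fun Z => G Z ^+ 2).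
Proof.
move=> t_ge0; rewrite mulr_suml /mean [X in _ <= X](bigID (fun Z => t <= G Z)) /=.
apply: ler_wpDr; first by apply: sumr_ge0 => Z _; rewrite mulr_ge0 ?wt_ge0 ?sqr_ge0.
apply: ler_sum => Z tG; rewrite ler_wpM2l ?wt_ge0 //.
by rewrite ler_sqr ?nnegrE // (le_trans t_ge0).
Qed.

End BernoulliNoise.

Section ReedMuller.
Variables m r : nat.
Local Notation W := (word m).

Definition monomial (S : {set 'I_m}) : W := [ffun x : point m => [forall i in S, x i]].
Definition addw (f g : W) : W := [ffun x : point m => f x (+) g x].

Lemma RM0 : [ffun=> false] \in RM m r.
Proof.
rewrite inE; apply/existsP; exists [ffun=> false]; apply/andP; split.
  by apply/forallP => S; rewrite ffunE implybT.
by apply/forallP => x; rewrite /monomial_eval ffunE big1 // => S _; rewrite ffunE.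
Qed.

Lemma RM_add f g : f \in RM m r -> g \in RM m r -> addw f g \in RM m r.
Proof.
rewrite !inE => /existsP[c /andP[/forallP c_deg /forallP f_c]].
move=> /existsP[d /andP[/forallP d_deg /forallP g_d]].
apply/existsP; exists [ffun S => c S (+) d S]; apply/andP; split.
  apply/forallP => S; apply/implyP => S_big; rewrite ffunE.
  by move: (implyP (c_deg S) S_big) (implyP (d_deg S) S_big); case: (c S); case: (d S).
apply/forallP => x; rewrite ffunE (eqP (f_c x)) (eqP (g_d x)) /monomial_eval.
rewrite -big_split /=; apply/eqP/eq_bigr => S _; rewrite ffunE.
by case: (c S); case: (d S); case: [forall i in S, x i].
Qed.

Lemma RM_monomial (S : {set 'I_m}) : (#|S| <= r)%N -> monomial S \in RM m r.
Proof.
move=> S_small; rewrite inE; apply/existsP; exists [ffun S' => S' == S].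
apply/andP; split.
  apply/forallP => S'; apply/implyP => S'_big; rewrite ffunE.
  by apply: contraTN S'_big => /eqP->; rewrite -leqNgt.
apply/forallP => x; rewrite ffunE /monomial_eval (bigD1 S) //= ffunE eqxx /=.
by rewrite big1 ?addbF // => S' /negbTE S'S; rewrite ffunE S'S.
Qed.

Lemma RM_precomp (phi : point m -> point m) (f : W) :
  (forall S : {set 'I_m}, (#|S| <= r)%N -> precomp phi (monomial S) \in RM m r) ->
  f \in RM m r -> precomp phi f \in RM m r.
Proof.
move=> phi_mono; rewrite [f \in _]inE => /existsP[c /andP[/forallP c_deg /forallP f_c]].
have -> : precomp phi f = \big[addw/[ffun=> false]]_(S | c S) precomp phi (monomial S).
  apply/ffunP => x; rewrite (big_morph (fun h : W => h x) (id1 := false) (op1 := addb)).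
  - rewrite ffunE (eqP (f_c (phi x))) /monomial_eval [RHS]big_mkcond /=.
    by apply: eq_bigr => S _; rewrite !ffunE; case: (c S).
  - by move=> g h; rewrite ffunE.
  - by rewrite ffunE.
apply: (big_ind (fun g : W => g \in RM m r)); [exact: RM0 | exact: RM_add |].
by move=> S cS; apply: phi_mono; rewrite leqNgt; apply: contraL cS => /(implyP (c_deg S)).
Qed.

Definition transvection (p q : 'I_m) (x : point m) : point m :=
  [ffun i => if i == q then x q (+) x p else x i].

Lemma transvectionK p q : p != q -> involutive (transvection p q).
Proof.
move=> pq x; apply/ffunP => i; rewrite !ffunE.
case: (eqVneq i q) => [->|//]; rewrite eqxx (negbTE pq).
by case: (x q); case: (x p).
Qed.

Lemma transvection0 p q : transvection p q (zeropt m) = zeropt m.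
Proof. by apply/ffunP => i; rewrite !ffunE; case: (i == q). Qed.

(* [x_S \o transvection] is [x_S] if [q \notin S], else [x_S + x_{S - q + p}]. *)
Lemma RM_precomp_transvection p q f : p != q ->
  f \in RM m r -> precomp (transvection p q) f \in RM m r.
Proof.
move=> pq; apply: RM_precomp => S S_small.
have [qS|qNS] := boolP (q \in S); last first.
  suff -> : precomp (transvection p q) (monomial S) = monomial S by exact: RM_monomial.
  apply/ffunP => x; rewrite !ffunE; apply: eq_forallb_in => i iS.
  by rewrite ffunE; case: eqP => // iq; rewrite -iq iS in qNS.
suff -> : precomp (transvection p q) (monomial S) =
          addw (monomial S) (monomial (p |: (S :\ q))).
  apply: RM_add; apply: RM_monomial; apply: leq_trans S_small => //.
  by rewrite cardsU1 (cardsD1 q S) qS add1n; case: (p \notin S :\ q).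
have forall_setU1 a B (g : 'I_m -> bool) :
    [forall i in a |: B, g i] = g a && [forall i in B, g i].
  apply/forall_inP/andP => [H|[ga /forall_inP H] i].
    by split; [apply: H; rewrite setU11 | apply/forall_inP => i iB; apply/H/setU1r].
  by case/setU1P => [->|]; [| apply: H].
apply/ffunP => x; rewrite !ffunE -{1 2}(setD1K qS) !forall_setU1 ffunE eqxx.
rewrite (@eq_forallb_in _ _ (fun i => transvection p q x i) (fun i => x i)); last first.
  by move=> i; rewrite !inE ffunE => /andP[/negbTE-> _].
by case: (x q); case: (x p); case: [forall i in S :\ q, x i].
Qed.

Definition swap_coords (p q : 'I_m) (x : point m) : point m := [ffun i => x (tperm p q i)].

Lemma swap_coordsK p q : involutive (swap_coords p q).
Proof. by move=> x; apply/ffunP => i; rewrite !ffunE tpermK. Qed.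

Lemma swap_coords0 p q : swap_coords p q (zeropt m) = zeropt m.
Proof. by apply/ffunP => i; rewrite !ffunE. Qed.

Lemma RM_precomp_swap p q f : f \in RM m r -> precomp (swap_coords p q) f \in RM m r.
Proof.
apply: RM_precomp => S S_small.
suff -> : precomp (swap_coords p q) (monomial S) = monomial (tperm p q @: S).
  by apply: RM_monomial; rewrite card_imset //; apply: perm_inj.
apply/ffunP => x; rewrite !ffunE; apply/forall_inP/forall_inP => H i.
  by case/imsetP => j jS ->; have := H j jS; rewrite ffunE.
by move=> iS; rewrite ffunE; apply/H/imset_f.
Qed.

End ReedMuller.

Section DecodingError.
Variables (R : realFieldType) (e : R) (m r : nat).
Local Notation W := (word m).
Local Notation z0 := (zeropt m).

Definition cond_err (Z : W) : R :=
  (#|RM m r|%:R)^-1 * \sum_(f in RM m r) derr r e (recv f Z) (f z0).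

Lemma Pe_mean : Pe m r e = mean e cond_err.
Proof.
rewrite /Pe exchange_big; apply: eq_bigr => Z _.
by rewrite /cond_err !mulr_sumr; apply: eq_bigr => f _; ring.
Qed.

Lemma card_RM_gt0 : (0 < #|RM m r|)%N.
Proof. by apply/card_gt0P; exists [ffun=> false]; apply: RM0. Qed.

Lemma derr_ge0 (y : W) b : 0 <= derr r e y b.
Proof. by rewrite /derr; case: ifP => _ //; case: ifP => _ //; lra. Qed.

Lemma derr_le1 (y : W) b : derr r e y b <= 1.
Proof. by rewrite /derr; case: ifP => _ //; case: ifP => _ //; lra. Qed.

Lemma cond_err_ge0 (Z : W) : 0 <= cond_err Z.
Proof.
by rewrite mulr_ge0 ?invr_ge0 ?ler0n // sumr_ge0 // => f _; apply: derr_ge0.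
Qed.

Lemma cond_err_le1 (Z : W) : cond_err Z <= 1.
Proof.
have RM_pos : 0 < (#|RM m r|%:R : R) by rewrite ltr0n card_RM_gt0.
rewrite /cond_err ler_pdivrMl // mulr1.
have -> : (#|RM m r|%:R : R) = \sum_(f in RM m r) 1 by rewrite sumr_const.
by apply: ler_sum => f _; apply: derr_le1.
Qed.

Section Symmetry.
Variable phi : point m -> point m.
Hypotheses (phiK : involutive phi) (phi0 : phi z0 = z0).
Hypothesis RM_phi : forall f, f \in RM m r -> precomp phi f \in RM m r.

Lemma mem_RM_precomp f : (precomp phi f \in RM m r) = (f \in RM m r).
Proof.
by apply/idP/idP => [|/RM_phi//]; rewrite -{2}(precompK phiK f); apply: RM_phi.
Qed.

Lemma lik_precomp (y : W) b : lik r e (precomp phi y) b = lik r e y b.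
Proof.
rewrite /lik [RHS](reindex_inj (inv_inj (precompK phiK))) /=.
apply: eq_big => [g|g _]; first by rewrite mem_RM_precomp ffunE phi0.
rewrite [RHS](reindex_inj (inv_inj phiK)) /=; apply: eq_big => [x|x _].
  by rewrite -[in phi x == _]phi0 (inj_eq (inv_inj phiK)).
by rewrite !ffunE phiK.
Qed.

Lemma cond_err_precomp (Z : W) : cond_err (precomp phi Z) = cond_err Z.
Proof.
rewrite /cond_err [in RHS](reindex_inj (inv_inj (precompK phiK))) /=.
congr (_ * _); apply: eq_big => [f|f _]; first by rewrite mem_RM_precomp.
have -> : recv (precomp phi f) Z = precomp phi (recv f (precomp phi Z)).
  by apply/ffunP => x; rewrite !ffunE phiK.
by rewrite /derr !lik_precomp ffunE phi0.
Qed.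

End Symmetry.

Lemma lik_flip0 (y : W) b : lik r e (flip z0 y) b = lik r e y b.
Proof.
by apply: eq_bigr => g _; apply: eq_bigr => x x_nz; rewrite ffunE (negbTE x_nz).
Qed.

Lemma cond_err_flip0 (Z : W) : cond_err (flip z0 Z) = cond_err Z.
Proof.
congr (_ * _); apply: eq_bigr => f _.
have -> : recv f (flip z0 Z) = flip z0 (recv f Z).
  by apply/ffunP => x; rewrite !ffunE; case: (x == z0); rewrite ?addbN.
by rewrite /derr !lik_flip0.
Qed.

(* Substitute the received word [y := recv f Z] for the noise [Z]. *)
Lemma Pe_lik : Pe m r e = (#|RM m r|%:R)^-1 *
  \sum_(y : W) \sum_(b : bool) bw e (b (+) y z0) * (derr r e y b * lik r e y b).
Proof.
have recvK (f : W) : involutive (recv f) by move=> y; apply/ffunP => x; rewrite !ffunE addKb.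
transitivity ((#|RM m r|%:R)^-1 * \sum_(f in RM m r) \sum_(y : W)
    bw e (f z0 (+) y z0) * \prod_(x | x != z0) bw e (y x (+) f x) * derr r e y (f z0)).
  rewrite /Pe mulr_sumr; apply: eq_bigr => f _.
  rewrite mulr_sumr (reindex_inj (inv_inj (recvK f))) /=; apply: eq_bigr => y _.
  rewrite recvK /wt (bigD1 z0) //= ffunE.
  under eq_bigr => x _ do rewrite ffunE addbC.
  ring.
congr (_ * _); rewrite exchange_big; apply: eq_bigr => y _ /=.
rewrite (partition_big (fun g : W => g z0) predT) //=; apply: eq_bigr => b _.
rewrite /lik !mulr_sumr; apply: eq_bigr => f /andP[_ /eqP->]; ring.
Qed.

Lemma derr_lik_le (y : W) :
  derr r e y true * lik r e y true + derr r e y false * lik r e y false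
  <= (lik r e y true + lik r e y false) / 2.
Proof.
rewrite /derr /=; set a := lik r e y true; set a' := lik r e y false.
by case: (ltgtP a' a) => [||->]; lra.
Qed.

Lemma sum_lik : \sum_(y : W) (lik r e y true + lik r e y false) = 2 * #|RM m r|%:R.
Proof.
transitivity (\sum_(y : W) \sum_(g in RM m r) \prod_(x | x != z0) bw e (y x (+) g x)).
  apply: eq_bigr => y _.
  by rewrite [RHS](partition_big (fun g : W => g z0) predT) //= big_bool.
rewrite exchange_big /= -sumr_const mulr_sumr; apply: eq_bigr => g _.
under eq_bigr do rewrite big_mkcond /=.
rewrite (sum_ffun_prod (fun x b => if x != z0 then bw e (b (+) g x) else 1)).
rewrite (bigD1 z0) //= eqxx big1 ?mulr1 // => x ->.
by case: (g x); rewrite /bw /=; ring.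
Qed.

(* The decoder ignores [y z0], which can thus be averaged out. *)
Lemma Pe_le_half : Pe m r e <= 1 / 2.
Proof.
have RM_pos : 0 < (#|RM m r|%:R : R) by rewrite ltr0n card_RM_gt0.
have avg b : \sum_(y : W) bw e (b (+) y z0) * (derr r e y b * lik r e y b)
            = \sum_(y : W) 1 / 2 * (derr r e y b * lik r e y b).
  rewrite (@sum_flip_avg _ _ z0 (fun w => bw e (b (+) w))) => [|y]; last first.
    by rewrite /derr !lik_flip0.
  by rewrite addbT addbF addrC bwDN.
rewrite Pe_lik exchange_big big_bool !avg -big_split /=.
rewrite ler_pdivrMl //.
apply: le_trans (_ : \sum_(y : W) (lik r e y true + lik r e y false) / 4 <= _).
  by apply: ler_sum => y _; have := derr_lik_le y; lra.
by rewrite -mulr_suml sum_lik; lra.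
Qed.

End DecodingError.

Section LowPoints.
Variable m : nat.

Definition lowpts (d : nat) : {set point m} :=
  [set x : point m | [forall i : 'I_m, (d <= i)%N ==> ~~ x i]].

Lemma lowptsS d (d_lt_m : (d < m)%N) x :
  (x \in lowpts d) = ~~ x (Ordinal d_lt_m) && (x \in lowpts d.+1).
Proof.
rewrite !inE; apply/forallP/andP => [H|[xd /forallP H] i].
  split; first by have := H (Ordinal d_lt_m); rewrite leqnn.
  by apply/forallP => i; apply/implyP => /ltnW d_le_i; apply: (implyP (H i)).
apply/implyP; rewrite leq_eqVlt => /orP[/eqP di|]; last exact: (implyP (H i)).
by have -> : i = Ordinal d_lt_m by apply: val_inj; rewrite /= di.
Qed.

Lemma lowpts_agree d (x y : point m) : (forall i : 'I_m, (d <= i)%N -> x i = y i) ->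
  (x \in lowpts d) = (y \in lowpts d).
Proof.
by move=> xy; rewrite !inE; apply: eq_forallb => i; case: leqP => // /xy->.
Qed.

Lemma lowpts0 : lowpts 0 :\ zeropt m = set0.
Proof.
apply/setP => x; rewrite !inE andbC; case: forallP => //= x0.
by apply/negbTE/negPn/eqP/ffunP => i; rewrite ffunE; have := x0 i; case: (x i).
Qed.

Lemma lowptsT : lowpts m = setT.
Proof. by apply/setP => x; rewrite !inE; apply/forallP => i; rewrite leqNgt ltn_ord. Qed.

Variable m_ : nat.
Hypothesis le_m_m : (m_ <= m)%N.

Lemma emb_widen (p : point m_) (j : 'I_m_) : emb m p (widen_ord le_m_m j) = p j.
Proof.
rewrite ffunE; case: insubP => [k _ kj|]; last by rewrite /= ltn_ord.
by congr (p _); apply: val_inj.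
Qed.

Lemma emb_inj : injective (@emb m_ m).
Proof. by move=> p q pq; apply/ffunP => j; rewrite -!emb_widen pq. Qed.

Lemma imset_emb : [set emb m p | p : point m_] = lowpts m_.
Proof.
apply/setP => x; apply/imsetP/idP => [[p _ ->]|x_low].
  rewrite inE; apply/forallP => i; apply/implyP => m_i; rewrite ffunE.
  by case: insubP => // k; rewrite ltnNge m_i.
exists [ffun j : 'I_m_ => x (widen_ord le_m_m j)] => //.
apply/ffunP => i; rewrite ffunE; case: insubP => [k _ ik|].
  by rewrite ffunE; congr (x _); apply: val_inj; rewrite /= ik.
rewrite -leqNgt => m_i; move: x_low; rewrite inE => /forallP /(_ i) /implyP /(_ m_i).
by case: (x i).
Qed.

End LowPoints.

Section Restriction.
Variables (R : realFieldType) (e : R) (m_ m : nat).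
Hypothesis le_m_m : (m_ <= m)%N.
Local Notation W := (word m).
Local Notation V := (lowpts m m_).

Lemma restr_surj (z : word m_) : exists Z : W, restr m_ Z = z.
Proof.
exists [ffun x : point m => z [ffun j : 'I_m_ => x (widen_ord le_m_m j)]].
apply/ffunP => p; rewrite !ffunE; congr (z _); apply/ffunP => j.
by rewrite ffunE emb_widen.
Qed.

Lemma eq_restr (U Z : W) : (restr m_ U == restr m_ Z) = [forall x in V, Z x == U x].
Proof.
rewrite -(imset_emb le_m_m); apply/eqP/forall_inP => [UZ _ /imsetP[p _ ->]|H].
  by have := congr1 (fun g : word m_ => g p) UZ; rewrite !ffunE => ->.
by apply/ffunP => p; rewrite !ffunE; apply/esym/eqP/H/imset_f.
Qed.

Lemma wt_restr (Z : W) : wt e (restr m_ Z) = \prod_(x in V) bw e (Z x).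
Proof.
rewrite -(imset_emb le_m_m) big_imset /=; last by move=> p q _ _; apply: emb_inj.
by apply: eq_bigr => p _; rewrite ffunE.
Qed.

Lemma sum_restr_fiber (F : W -> R) (Z : W) :
  \sum_(U : W | restr m_ U == restr m_ Z) wt e U * F U = wt e (restr m_ Z) * condE e V F Z.
Proof.
rewrite /condE mulr_sumr big_mkcond /=; apply: eq_bigr => U _; rewrite mulrA.
case: ifPn; rewrite eq_restr; [move=> /forall_inP ZU | move=> /forall_inPn[x xV ZUx]].
  congr (_ * _); rewrite wt_restr big_mkcond -big_split /=; apply: eq_bigr => x _.
  by rewrite /cond_kernel; case: ifPn => [/ZU/eqP->|]; rewrite ?eqxx ?mulr1 ?mul1r.
by rewrite (bigD1 x) //= xV /cond_kernel (negbTE ZUx) mul0r mulr0 mul0r.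
Qed.

Lemma sum_wt_fiber (z : word m_) : \sum_(U : W | restr m_ U == z) wt e U = wt e z.
Proof.
have [Z <-] := restr_surj z.
under eq_bigr do rewrite -[wt e _]mulr1.
by rewrite sum_restr_fiber condE_cst mulr1.
Qed.

End Restriction.

Section ConditionalError.
Variables (R : realFieldType) (e : R) (m_ m r : nat).
Hypotheses (e_gt0 : 0 < e) (e_lt1 : e < 1) (le_m_m : (m_ <= m)%N).
Local Notation W := (word m).

Lemma wt_gt0 (T : finType) (Z : {ffun T -> bool}) : 0 < wt e Z.
Proof. by apply: prodr_gt0 => x _; rewrite /bw; case: (Z x); rewrite ?subr_gt0. Qed.

Lemma condPe_restr (Z : W) :
  condPe m_ m r e (restr m_ Z) = condE e (lowpts m m_) (cond_err e r) Z.
Proof.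
rewrite /condPe exchange_big /= sum_wt_fiber //.
transitivity ((\sum_(U : W | restr m_ U == restr m_ Z) wt e U * cond_err e r U)
              / wt e (restr m_ Z)).
  congr (_ / _); apply: eq_bigr => U _.
  by rewrite /cond_err !mulr_sumr; apply: eq_bigr => f _; ring.
by rewrite sum_restr_fiber // mulrC mulKf // gt_eqF // wt_gt0.
Qed.

Lemma sum_wt_condPe (Q : pred R) :
  \sum_(z : word m_ | Q (condPe m_ m r e z)) wt e z
  = \sum_(Z : W | Q (condE e (lowpts m m_) (cond_err e r) Z)) wt e Z.
Proof.
rewrite (eq_bigl (fun Z : W => Q (condPe m_ m r e (restr m_ Z)))) => [|Z]; last first.
  by rewrite condPe_restr.
rewrite (partition_big (@restr m_ m) (fun z => Q (condPe m_ m r e z))) //=.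
apply: eq_bigr => z Qz; rewrite -(sum_wt_fiber e le_m_m z).
by apply: eq_bigl => U; case: eqP => [->|]; rewrite ?Qz ?andbF.
Qed.

End ConditionalError.

Section Recurrence.
Variables (R : realFieldType) (e : R) (m r : nat).
Hypotheses (e_ge0 : 0 <= e) (e_le1 : e <= 1).
Local Notation W := (word m).
Local Notation z0 := (zeropt m).

Definition centered_err (Z : W) : R := cond_err e r Z - Pe m r e.

Definition var_low (d : nat) : R := msq_condE e (lowpts m d) centered_err.

Lemma var_low_ge0 d : 0 <= var_low d.
Proof. by apply: sumr_ge0 => Z _; rewrite mulr_ge0 ?wt_ge0 ?sqr_ge0. Qed.

Lemma centered_err_precomp (phi : point m -> point m) :
  involutive phi -> phi z0 = z0 ->
  (forall f, f \in RM m r -> precomp phi f \in RM m r) ->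
  forall U, centered_err (precomp phi U) = centered_err U.
Proof. by move=> phiK phi0 RM_phi U; rewrite /centered_err cond_err_precomp. Qed.

Lemma var_low_step n : (n.+2 <= m)%N ->
  3 * var_low n.+1 <= var_low n.+2 + 2 * var_low n.
Proof.
move=> n2_le_m; have n_lt_m : (n < m)%N by apply: ltn_trans n2_le_m.
set p := Ordinal n_lt_m; set q := Ordinal n2_le_m.
have pq : p != q by rewrite -val_eqE /= ltn_eqF.
set U := lowpts m n.+2; set V1 := lowpts m n.+1; set C := lowpts m n.
set V2 := [set x | swap_coords p q x \in V1].
set V3 := [set x | transvection p q x \in V1].
have inV1 x : (x \in V1) = ~~ x q && (x \in U) by rewrite [LHS](lowptsS n2_le_m).
have inC x : (x \in C) = ~~ x p && ~~ x q && (x \in U).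
  by rewrite [LHS](lowptsS n_lt_m) inV1 andbA.
have inV2 x : (x \in V2) = ~~ x p && (x \in U).
  rewrite inE inV1 ffunE tpermR; congr (_ && _); apply: lowpts_agree => i n2_le_i.
  by rewrite ffunE tpermD // -val_eqE /= ?(ltn_eqF n2_le_i) ?(ltn_eqF (ltnW n2_le_i)).
have inV3 x : (x \in V3) = (x q == x p) && (x \in U).
  rewrite inE inV1 ffunE eqxx; congr (_ && _).
    by case: (x q); case: (x p).
  apply: lowpts_agree => i n2_le_i; rewrite ffunE.
  by case: eqP => // iq; rewrite iq ltnn in n2_le_i.
have V1U : V1 \subset U by apply/subsetP => x; rewrite inV1 => /andP[].
have V2U : V2 \subset U by apply/subsetP => x; rewrite inV2 => /andP[].
have V3U : V3 \subset U by apply/subsetP => x; rewrite inV3 => /andP[].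
have [V12 V13 V23] : [/\ V1 :&: V2 = C, V1 :&: V3 = C & V2 :&: V3 = C].
  by split; apply/setP => x; rewrite in_setI inC ?inV1 ?inV2 ?inV3;
    case: (x p); case: (x q); case: (x \in U).
have V2_eq : msq_condE e V2 centered_err = var_low n.+1.
  rewrite /V2 (msq_condE_precomp e (swap_coordsK p q)) //; apply: centered_err_precomp.
  - exact: swap_coordsK.
  - exact: swap_coords0.
  - exact: RM_precomp_swap.
have V3_eq : msq_condE e V3 centered_err = var_low n.+1.
  rewrite /V3 (msq_condE_precomp e (transvectionK pq)) //; apply: centered_err_precomp.
  - exact: transvectionK.
  - exact: transvection0.
  - by move=> f; apply: RM_precomp_transvection.
have := msq_condE_triple e_ge0 e_le1 centered_err V1U V2U V3U V12 V13 V23.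
by rewrite V2_eq V3_eq /var_low -/U -/V1 -/C; lra.
Qed.

Lemma var_low0 : var_low 0 = 0.
Proof.
have mean0 : mean e centered_err = 0.
  rewrite /mean /centered_err; under eq_bigr do rewrite mulrBr.
  by rewrite sumrB -mulr_suml sum_wt mul1r Pe_mean subrr.
apply: big1 => Z _; rewrite (@condE_setD1 _ e _ _ z0) => [|U]; last first.
  by rewrite /centered_err cond_err_flip0.
by rewrite lowpts0 condE_set0 mean0 expr2 !mulr0.
Qed.

Lemma var_lowT : var_low m <= 1.
Proof.
have Pe_ge0 : 0 <= Pe m r e.
  by rewrite Pe_mean; apply: sumr_ge0 => Z _; rewrite mulr_ge0 ?wt_ge0 ?cond_err_ge0.
rewrite /var_low lowptsT -(sum_wt e (point m)); apply: ler_sum => Z _.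
rewrite condE_setT ler_piMr ?wt_ge0 // /centered_err.
have := Pe_le_half e m r; have := cond_err_ge0 e r Z; have := cond_err_le1 e r Z.
by nra.
Qed.

Lemma var_low_double d : (d < m)%N -> 2 * var_low d <= var_low d.+1.
Proof.
elim: d => [_|d IH d_lt_m]; first by rewrite var_low0 mulr0 var_low_ge0.
by have := var_low_step d_lt_m; have := IH (ltnW d_lt_m); lra.
Qed.

Lemma var_low_pow2 d k : (d + k <= m)%N -> var_low d * 2 ^+ k <= var_low (d + k).
Proof.
elim: k => [|k IH] dk_le_m; first by rewrite mulr1 addn0.
rewrite addnS in dk_le_m *; have := var_low_double dk_le_m; have := IH (ltnW dk_le_m).
have := var_low_ge0 d; have : (0 : R) <= 2 ^+ k by apply: exprn_ge0.
by rewrite exprS; nra.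
Qed.

End Recurrence.

Theorem lemma3 (R : realFieldType) (m_ m r : nat) (e : R) :
  (m_ < m)%N -> 0 < e -> e < 1 / 2 ->
  (\sum_(z' : word m_ | Pe m r e / 2 + 1 / 4 <= condPe m_ m r e z') wt e z')
    * (1 / 2 - Pe m r e) ^+ 2
  <= (2 : R) ^ (2%:Z - (m - m_)%:Z).
Proof.
move=> lt_m_m e_gt0 e_lt_half.
have [e_ge0 e_le1 e_lt1] : [/\ 0 <= e, e <= 1 & e < 1] by split; lra.
have le_m_m := ltnW lt_m_m.
rewrite (sum_wt_condPe r e_gt0 e_lt1 le_m_m (fun v => Pe m r e / 2 + 1 / 4 <= v)) /=.
set V := lowpts m m_; set P := Pe m r e; set k := (m - m_)%N; set t := (1 / 2 - P) / 2.
have t_ge0 : 0 <= t by have := Pe_le_half e m r; rewrite -/P /t; lra.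
have cheb : (\sum_(Z : word m | P / 2 + 1 / 4 <= condE e V (cond_err e r) Z) wt e Z)
            * t ^+ 2 <= var_low e m r m_.
  rewrite (eq_bigl (fun Z => t <= condE e V (centered_err e r) Z)) => [|Z].
    exact: chebyshev.
  by rewrite /centered_err condE_subr lerBrDr -/P /t; congr (_ <= _); lra.
have decay : var_low e m r m_ * 2 ^+ k <= 1.
  have := @var_low_pow2 R e m r e_ge0 e_le1 m_ k; rewrite subnKC // => /(_ (leqnn m)).
  by move/le_trans; apply; apply: var_lowT.
have -> : (2 : R) ^ (2%:Z - k%:Z) = 4 / 2 ^+ k.
  by rewrite expfzDr ?pnatr_eq0 // exprnN -exprnP expr2 -natrM.
have pow_gt0 : (0 : R) < 2 ^+ k by apply: exprn_gt0.
rewrite ler_pdivlMr //.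
by move: cheb decay (var_low_ge0 m r e_ge0 e_le1 m_); rewrite /t; nra.
Qed.
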